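(* For disjoint $I,J\subset\{1,\dots,n\}$, the function $g(I,J)=\bigl(\Psi^{*(-1)}*D_I\Psi\bigr)(J)$ satisfies \[ g(\emptyset,J)=\delta_{\emptyset,J},\qquad g(I,J)=\Bigl(\prod_{i\in I'}(1+\zeta_{i,\iota(I)})\Bigr)\sum_{K\subset J}\Bigl(\prod_{i\in K}\zeta_{i,\iota(I)}\Bigr)g(I'\cup K,J\setminus K)\quad\text{if }I\neq\emptyset, \] where $I'=I\setminus\{\iota(I)\}$. (This system of equations determines $g$ uniquely by induction on $|I|+|J|$.)
   Context: Fix $n\ge1$, real numbers $b_1,\dots,b_n\ge0$ and complex numbers $\zeta_{ij}=\zeta_{ji}$ such that $\prod_{i,j\in I,i<j}|1+\zeta_{ij}|\le\prod_{i\in I}e^{b_i}$ for every $I\subset\{1,\dots,n\}$. Let $\mathcal{A}$ be the set of complex functions on the power set of $\{1,\dots,n\}$, with product $f*g(I)=\sum_{J\subset I}f(J)g(I\setminus J)$; this is a commutative algebra with unit $1_{\mathcal A}(I)=\delta_{I,\emptyset}$, and any $f$ with $f(\emptyset)\neq0$ has a unique $*$-inverse $f^{*(-1)}$. For $I\subset\{1,\dots,n\}$ define $D_If(J)=f(I\cup J)$ if $I\cap J=\emptyset$ and $D_If(J)=0$ otherwise. Let $\Psi(I)=\prod_{i,j\in I,i<j}(1+\zeta_{ij})$ (so $\Psi(\emptyset)=1$). Let $\iota$ be a function assigning to each nonempty $I\subset\{1,\dots,n\}$ an element $\iota(I)\in I$ such that $\prod_{j\in I\setminus\{\iota(I)\}}|1+\zeta_{j,\iota(I)}|\le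 e^{2b_{\iota(I)}}$ (such an element exists by the hypothesis). Empty sums are $0$, empty products are $1$. *)

From HB Require Import structures.
From mathcomp Require Import all_boot all_order all_algebra.
Set Implicit Arguments. Unset Strict Implicit. Unset Printing Implicit Defensive.
Import Order.TTheory GRing.Theory Num.Theory.
Local Open Scope ring_scope.

Section SetAlgebra.
Variables (C : numClosedFieldType) (n : nat).
Local Notation S := {set 'I_n}.

Definition sconv (f g : S -> C) : S -> C :=
  fun I => \sum_(J : S | J \subset I) f J * g (I :\: J).

Definition sunit : S -> C := fun I => (I == set0)%:R.

(* *-inverse, computed by the recursion
   f^{-1}(0) = 1/f(0),  f^{-1}(I) = -(1/f(0)) sum_{0 <> J subset I} f(J) f^{-1}(I\J),
   with a fuel argument; the fuel #|I| suffices. *)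
Fixpoint sinv_aux (f : S -> C) (k : nat) (I : S) : C :=
  match k with
  | 0%N => if I == set0 then (f set0)^-1 else 0
  | k'.+1 => if I == set0 then (f set0)^-1 else
      - (f set0)^-1 * \sum_(J : S | (J \subset I) && (J != set0)) f J * sinv_aux f k' (I :\: J)
  end.

Definition sinv (f : S -> C) : S -> C := fun I => sinv_aux f #|I| I.

Definition sD (I : S) (f : S -> C) : S -> C :=
  fun J => if [disjoint I & J] then f (I :|: J) else 0.

Definition Psi (zeta : 'I_n -> 'I_n -> C) : S -> C :=
  fun I => \prod_(i in I) \prod_(j in I | (i < j)%N) (1 + zeta i j).

Definition gfun (zeta : 'I_n -> 'I_n -> C) (I J : S) : C :=
  sconv (sinv (Psi zeta)) (sD I (Psi zeta)) J.

End SetAlgebra.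

From HB Require Import structures.
From mathcomp Require Import all_boot all_order all_algebra zify.
Set Implicit Arguments. Unset Strict Implicit. Unset Printing Implicit Defensive.
Import Order.TTheory GRing.Theory Num.Theory.
Local Open Scope ring_scope.

(* Fix a point x of I and put I' = I \ x.  Adding x to a set A multiplies Psi(A)
   by prod_{a in A} (1 + zeta_{a x}).  Hence, for M disjoint from I,
     D_I Psi(M) = Psi(I' u M) prod_{I'} (1 + zeta_{i x}) prod_M (1 + zeta_{i x}),
   and expanding the last product as a sum over subsets K of M gives
     D_I Psi(M) = c_I sum_{K <= M} zeta_K^x D_{I' u K} Psi(M \ K).
   Convolving with Psi^{*(-1)} and exchanging the two subset sums yields the
   recursion for g, while g(emptyset, -) = Psi^{*(-1)} * Psi is the unit.
   Uniqueness is a general fact: any recursion of this shape determines its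
   solution on disjoint pairs, by induction on |I| + |J|. *)

Section SubsetCombinatorics.
Variable T : finType.
Implicit Types I J K L : {set T}.

Lemma prod_1addE (R : comPzRingType) I (z : T -> R) :
  \prod_(i in I) (1 + z i) = \sum_(K : {set T} | K \subset I) \prod_(i in K) z i.
Proof.
rewrite big_mkcond /= (eq_bigr (fun i => (if i \in I then z i else 0) + 1)); last first.
  by move=> i _; case: ifP; rewrite ?add0r // addrC.
rewrite bigA_distr [RHS]big_mkcond /=; apply: eq_bigr => K _.
case: (boolP (K \subset I)) => [KI | /subsetPn [i iK iI]].
  by rewrite [RHS]big_mkcond; apply: eq_bigr => i _; case: ifP => // /(subsetP KI) ->.
by rewrite (bigD1 i) //= iK (negbTE iI) mul0r.
Qed.

Lemma sum_subset_exchange (R : nmodType) J (F : {set T} -> {set T} -> R) :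
  \sum_(L : {set T} | L \subset J) \sum_(K : {set T} | K \subset J :\: L) F L K =
  \sum_(K : {set T} | K \subset J) \sum_(L : {set T} | L \subset J :\: K) F L K.
Proof.
rewrite (exchange_big_dep (fun K => K \subset J)) /=; last first.
  by move=> L K _; rewrite subsetD => /andP [].
apply: eq_bigr => K KJ; apply: eq_bigl => L.
by rewrite !subsetD KJ /= disjoint_sym.
Qed.

Lemma disjoint_shift I J K : [disjoint I & J] -> K \subset J ->
  [disjoint I :|: K & J :\: K].
Proof.
move=> dIJ KJ; rewrite -setI_eq0; apply/eqP/setP => i; rewrite !inE.
case: (boolP (i \in K)) => /= [|_]; first by rewrite andbF.
by case: (boolP (i \in I)) => //= /(disjointFr dIJ) ->.
Qed.

Lemma card_shift_lt x I J K : x \in I -> K \subset J ->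
  (#|I :\ x :|: K| + #|J :\: K| < #|I| + #|J|)%N.
Proof.
move=> xI KJ; have cardU : (#|I :\ x :|: K| <= #|I :\ x| + #|K|)%N by exact: leq_card_setU.
have := subset_leq_card KJ; rewrite cardsDS // (cardsD1 x I) xI; lia.
Qed.

End SubsetCombinatorics.

Section SubsetRecursion.
Variables (T : finType) (R : pzSemiRingType).

Definition subset_rec_eqn (r : {set T} -> T) (a : {set T} -> R)
    (w : {set T} -> {set T} -> R) (h : {set T} -> {set T} -> R) : Prop :=
  forall I J : {set T}, [disjoint I & J] -> I != set0 ->
    h I J = a I * \sum_(K : {set T} | K \subset J) w I K * h (I :\ r I :|: K) (J :\: K).

Lemma subset_rec_unique r a w (h1 h2 : {set T} -> {set T} -> R) :
    (forall I : {set T}, I != set0 -> r I \in I) ->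
    (forall J, h1 set0 J = h2 set0 J) ->
    subset_rec_eqn r a w h1 -> subset_rec_eqn r a w h2 ->
  forall I J : {set T}, [disjoint I & J] -> h1 I J = h2 I J.
Proof.
move=> rI h0 rec1 rec2.
suff H m (I J : {set T}) : (#|I| + #|J| < m)%N -> [disjoint I & J] -> h1 I J = h2 I J.
  by move=> I J; apply: H.
elim: m I J => // m IH I J hm dIJ.
have [->|I0] := eqVneq I set0; first exact: h0.
rewrite rec1 // rec2 //; congr (_ * _); apply: eq_bigr => K KJ; congr (_ * _).
apply: IH; first exact: leq_trans (card_shift_lt (rI I I0) KJ) hm.
exact: disjoint_shift (disjointWl (subsetDl _ _) dIJ) KJ.
Qed.

End SubsetRecursion.

Section SubsetConvolution.
Variables (C : numClosedFieldType) (n : nat).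
Local Notation S := {set 'I_n}.
Variable f : S -> C.

Lemma card_setD_lt (I J : S) : J \subset I -> J != set0 -> (#|I :\: J| < #|I|)%N.
Proof.
move=> JI J0; rewrite cardsDS //; have := subset_leq_card JI.
by rewrite -card_gt0 in J0; lia.
Qed.

Lemma sinv_aux_step k (I : S) : sinv_aux f k.+1 I = if I == set0 then (f set0)^-1 else
  - (f set0)^-1 * \sum_(J : S | (J \subset I) && (J != set0)) f J * sinv_aux f k (I :\: J).
Proof. by []. Qed.

Lemma sinv_aux_succ k (I : S) : (#|I| <= k)%N -> sinv_aux f k.+1 I = sinv_aux f k I.
Proof.
elim: k I => [|k IH] I hI.
  have -> : I = set0 by apply/eqP; rewrite -cards_eq0 -leqn0.
  by rewrite /= eqxx.
rewrite !sinv_aux_step; case: (I == set0) => //; congr (_ * _); apply: eq_bigr => J /andP [JI J0].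
by rewrite IH // -ltnS; apply: leq_trans hI; exact: card_setD_lt.
Qed.

Lemma sinv_aux_enough k (I : S) : (#|I| <= k)%N -> sinv_aux f k I = sinv f I.
Proof.
move=> hI; rewrite /sinv -(subnK hI); elim: (k - #|I|)%N => // m IH.
by rewrite addSn sinv_aux_succ ?IH // leq_addl.
Qed.

Lemma sinv_rec (I : S) : I != set0 -> sinv f I =
  - (f set0)^-1 * \sum_(J : S | (J \subset I) && (J != set0)) f J * sinv f (I :\: J).
Proof.
move=> I0; rewrite /sinv; case E: #|I| => [|k].
  by move/eqP: E; rewrite cards_eq0 (negbTE I0).
rewrite /= (negbTE I0); congr (_ * _); apply: eq_bigr => J /andP [JI J0].
by rewrite sinv_aux_enough // -ltnS -E; exact: card_setD_lt.
Qed.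

(* The subset convolution is commutative (substitute J by I \ J). *)
Lemma sconvC (g h : S -> C) : sconv g h =1 sconv h g.
Proof.
move=> I; rewrite /sconv (reindex_onto (fun J => I :\: J) (fun J => I :\: J)) /=.
  apply: eq_big => [J|J /andP [_ /eqP ->]]; last by rewrite mulrC.
  rewrite subsetDl setDDr setDv set0U; apply/eqP/idP => [<-|/setIidPr //].
  exact: subsetIl.
by move=> J JI; rewrite setDDr setDv set0U; exact/setIidPr.
Qed.

Lemma sinvK (I : S) : f set0 != 0 -> sconv (sinv f) f I = sunit C I.
Proof.
move=> f0; rewrite sconvC /sconv /sunit; have [->|I0] := eqVneq I set0.
  rewrite (big_pred1 set0) => [|J]; last by rewrite subset0.
  by rewrite setD0 /sinv cards0 /= eqxx mulfV.
rewrite (bigD1 set0) ?sub0set //= setD0 sinv_rec // mulrA mulrN mulfV // mulN1r.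
by rewrite (eq_bigl (fun J : S => (J \subset I) && (J != set0))) ?addNr.
Qed.

End SubsetConvolution.

Section PsiRecursion.
Variables (C : numClosedFieldType) (n : nat).
Local Notation S := {set 'I_n}.
Variable zeta : 'I_n -> 'I_n -> C.
Hypothesis zetaC : forall i j, zeta i j = zeta j i.

(* Psi(emptyset) = 1, so Psi is invertible for the subset convolution. *)
Lemma Psi0 : Psi zeta set0 = 1.
Proof. by rewrite /Psi big_set0. Qed.

Lemma Psi_setU1 x (A : S) : x \notin A ->
  Psi zeta (x |: A) = Psi zeta A * \prod_(a in A) (1 + zeta a x).
Proof.
move=> xA; rewrite /Psi big_setU1 //=.
have -> : \prod_(j in x |: A | (x < j)%N) (1 + zeta x j)
        = \prod_(j in A | (x < j)%N) (1 + zeta x j).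
  by rewrite big_mkcondr [RHS]big_mkcondr /= big_setU1 //= ltnn mul1r.
have inner i : i \in A -> \prod_(j in x |: A | (i < j)%N) (1 + zeta i j)
   = (if (i < x)%N then 1 + zeta i x else 1) * \prod_(j in A | (i < j)%N) (1 + zeta i j).
  by move=> iA; rewrite big_mkcondr [X in _ = _ * X]big_mkcondr /= big_setU1.
rewrite (eq_bigr _ inner) big_split /= mulrA [RHS]mulrC; congr (_ * _).
rewrite [RHS](bigID (fun a : 'I_n => (a < x)%N)) /= mulrC; congr (_ * _).
  by rewrite big_mkcondr.
apply: eq_big => [a|a _]; last by rewrite zetaC.
case: (boolP (a \in A)) => //= aA.
have xa : (x : nat) != a by apply: contraNneq xA => /val_inj ->.
by rewrite -leqNgt ltn_neqAle xa.
Qed.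

(* The recursion for D_I Psi obtained by splitting off a point x of I:
   D_I Psi (M) = prod_{I'} (1 + zeta_{i x}) * sum_{K <= M} zeta_K^x D_{I' u K} Psi (M \ K),
   where I' = I \ x; it comes from Psi (I u M) = Psi (I' u M) prod_{I' u M} (1 + zeta_{i x})
   after expanding the product over M into a sum over subsets. *)
Lemma sD_Psi_rec x (I M : S) : x \in I -> [disjoint I & M] ->
  sD I (Psi zeta) M = (\prod_(i in I :\ x) (1 + zeta i x)) *
    \sum_(K : S | K \subset M) (\prod_(i in K) zeta i x) * sD (I :\ x :|: K) (Psi zeta) (M :\: K).
Proof.
move=> xI dIM; set I' := I :\ x.
have dI'M : [disjoint I' & M] by apply: disjointWl dIM; exact: subsetDl.
have xI'M : x \notin I' :|: M by rewrite !inE eqxx /= (disjointFr dIM xI).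
have summand (K : S) : K \subset M -> sD (I' :|: K) (Psi zeta) (M :\: K) = Psi zeta (I' :|: M).
  move=> KM; rewrite /sD disjoint_shift //; congr (Psi zeta _).
  by apply/setP => i; rewrite !inE; case: (boolP (i \in K)) => [/(subsetP KM) ->|]; rewrite ?orbT ?orbF.
under [X in _ * X]eq_bigr => K KM do rewrite summand //.
rewrite -big_distrl /= -prod_1addE /sD dIM -(setD1K xI) -setUA Psi_setU1 //.
have prodU : \prod_(a in I' :|: M) (1 + zeta a x) =
    \prod_(a in I') (1 + zeta a x) * \prod_(a in M) (1 + zeta a x).
  by rewrite -bigU //; apply: eq_bigl => i; rewrite !inE.
by rewrite -/I' prodU mulrCA [_ * Psi zeta _]mulrC.
Qed.

Lemma gfun_rec x (I J : S) : x \in I -> [disjoint I & J] ->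
  gfun zeta I J = (\prod_(i in I :\ x) (1 + zeta i x)) *
    \sum_(K : S | K \subset J) (\prod_(i in K) zeta i x) * gfun zeta (I :\ x :|: K) (J :\: K).
Proof.
move=> xI dIJ; rewrite /gfun /sconv.
under [LHS]eq_bigr => L LJ do rewrite (sD_Psi_rec xI (disjointWr (subsetDl J L) dIJ)) mulrCA big_distrr.
rewrite -big_distrr /= sum_subset_exchange; congr (_ * _); apply: eq_bigr => K KJ.
rewrite big_distrr; apply: eq_bigr => L LJK /=.
by rewrite mulrCA !setDDl [L :|: K]setUC.
Qed.

(* g(emptyset, -) is the unit of the subset algebra since D_emptyset Psi = Psi. *)
Lemma gfun0 (J : S) : gfun zeta set0 J = sunit C J.
Proof.
rewrite -(sinvK J (_ : Psi zeta set0 != 0)) ?Psi0 ?oner_neq0 // /gfun /sconv; apply: eq_bigr => K _.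
by rewrite /sD -setI_eq0 set0I eqxx set0U.
Qed.

End PsiRecursion.

Theorem mainTheorem5 (C : numClosedFieldType) (n : nat) (hn : (0 < n)%N)
  (eb : 'I_n -> C) (* eb i stands for e^{b_i} *)
  (heb : forall i, eb i \is Num.real /\ 1 <= eb i)
  (zeta : 'I_n -> 'I_n -> C)
  (hsym : forall i j, zeta i j = zeta j i)
  (hbound : forall I : {set 'I_n},
     \prod_(i in I) \prod_(j in I | (i < j)%N) `|1 + zeta i j| <= \prod_(i in I) eb i)
  (iota : {set 'I_n} -> 'I_n)
  (hiota : forall I : {set 'I_n}, I != set0 ->
     iota I \in I /\
     \prod_(j in I :\ iota I) `|1 + zeta j (iota I)| <= eb (iota I) ^+ 2) :
  let g := gfun zeta in
  (forall J : {set 'I_n}, g set0 J = (J == set0)%:R) /\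
  (forall I J : {set 'I_n}, [disjoint I & J] -> I != set0 ->
     g I J = (\prod_(i in I :\ iota I) (1 + zeta i (iota I))) *
       \sum_(K : {set 'I_n} | K \subset J)
          (\prod_(i in K) zeta i (iota I)) * g ((I :\ iota I) :|: K) (J :\: K)) /\
  (forall h : {set 'I_n} -> {set 'I_n} -> C,
     (forall J : {set 'I_n}, h set0 J = (J == set0)%:R) ->
     (forall I J : {set 'I_n}, [disjoint I & J] -> I != set0 ->
        h I J = (\prod_(i in I :\ iota I) (1 + zeta i (iota I))) *
          \sum_(K : {set 'I_n} | K \subset J)
             (\prod_(i in K) zeta i (iota I)) * h ((I :\ iota I) :|: K) (J :\: K)) ->
     forall I J : {set 'I_n}, [disjoint I & J] -> h I J = g I J).
Proof.
(* Only the symmetry of zeta and the membership iota(I) \in I are needed. *)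
move=> g.
have iotaI (I : {set 'I_n}) : I != set0 -> iota I \in I by move=> /hiota [].
have gnil (J : {set 'I_n}) : g set0 J = (J == set0)%:R := gfun0 zeta J.
have grec : subset_rec_eqn iota (fun I => \prod_(i in I :\ iota I) (1 + zeta i (iota I)))
    (fun I K => \prod_(i in K) zeta i (iota I)) g.
  by move=> I J dIJ I0; exact: (gfun_rec hsym (iotaI I I0) dIJ).
split; first exact: gnil.
split; first exact: grec.
move=> h hnil hrec; apply: subset_rec_unique iotaI _ hrec grec.
by move=> J; rewrite hnil gnil.
Qed.
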